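(* Let $R$ be a commutative ring with $1$, $\overline{Q}$ the double quiver of a finite quiver $Q$, $Q_0'\subseteq Q_0$ a nonempty subset, $\lambda_i\in R$ for $i\in Q_0'$, and $A=R\overline{Q}/(\mu-\lambda)$. For every left $A$-module $V$, the sequence of left $A$-modules $$0\to V\xrightarrow{\epsilon}\bigoplus_{i\in Q_0}\mathrm{Hom}_R(e_iA,V_i)\xrightarrow{g}\bigoplus_{a\in\overline{Q}_1}\mathrm{Hom}_R(e_{ta}A,V_{ha})\xrightarrow{m}\bigoplus_{i\in Q_0'}\mathrm{Hom}_R(e_iA,V_i)$$ is exact, where for $p_i\in e_iA$: $\epsilon(v)(p_i)=p_iv$; $g(\kappa)_a(p_{ta})=\kappa_{ha}(a\,p_{ta})-a\,\kappa_{ta}(p_{ta})$; $m(\gamma)_i(p_i)=\sum_{a\in\overline{Q}_1:\,ta=i}(-1)^{|a|}\big(\overline{a}\,\gamma_a(p_i)+\gamma_{\overline{a}}(a\,p_i)\big)$.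
   Context: $Q$ is a finite quiver with vertex set $Q_0$, arrow set $Q_1$, tail and head maps $t,h:Q_1\to Q_0$. The double quiver $\overline{Q}$ has vertex set $Q_0$ and arrow set $\overline{Q}_1=Q_1\sqcup\{\overline{a}:a\in Q_1\}$ where $\overline{a}$ has $t\overline{a}=ha$, $h\overline{a}=ta$; set $\overline{\overline{a}}=a$. Define $|a|=0$ if $a\in Q_1$ and $|a|=1$ otherwise. A path is a word $a_1\cdots a_m$ of arrows with $ta_k=ha_{k+1}$; $hp=ha_1$, $tp=ta_m$; there is a trivial path $e_i$ with $he_i=te_i=i$ for each vertex. The path algebra $R\overline{Q}$ is the free $R$-module on paths with product $p\cdot q=pq$ (concatenation) if $tp=hq$ and $0$ otherwise, $pe_{tp}=p=e_{hp}p$. $(\mu-\lambda)$ denotes the two-sided ideal generated by the single element $\sum_{i\in Q_0'}\big(\sum_{a\in\overline{Q}_1:ha=i}(-1)^{|a|}a\overline{a}-\lambda_ie_i\big)$, and $A=R\overline{Q}/(\mu-\lambda)$. For an $A$-module $V$, $V_i:=e_iV$. The right $A$-module $e_iA$ makes $\mathrm{Hom}_R(e_iA,V_j)$ a left $A$-module via $(x\cdot\kappa)(p)=\kappa(px)$. *)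

From HB Require Import structures.
From mathcomp Require Import all_boot all_order all_algebra.
Set Implicit Arguments. Unset Strict Implicit. Unset Printing Implicit Defensive.
Import GRing.Theory.
Local Open Scope ring_scope.

Section DoubleQuiver.
Variables (Q0 Q1 : finType) (t h : Q1 -> Q0).

(* Arrows of the double quiver: inl a = a, inr a = abar. *)
Definition darrow := (Q1 + Q1)%type.
Definition dt (a : darrow) : Q0 := match a with inl b => t b | inr b => h b end.
Definition dh (a : darrow) : Q0 := match a with inl b => h b | inr b => t b end.
Definition dbar (a : darrow) : darrow :=
  match a with inl b => inr b | inr b => inl b end.
Definition dsgn (a : darrow) : nat := match a with inl _ => 0%N | inr _ => 1%N end.

(* Paths: a vertex together with a word a_1 ... a_m of arrows,
   t a_k = h a_{k+1}; for m > 0 the vertex is h a_1, for m = 0 the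
   pair (i, [::]) is the trivial qpath e_i. *)
Fixpoint chain (s : seq darrow) : bool :=
  match s with
  | a :: ((b :: _) as s') => (dt a == dh b) && chain s'
  | _ => true
  end.
Definition valid (x : Q0 * seq darrow) : bool :=
  chain x.2 && (if x.2 is a :: _ then x.1 == dh a else true).
Definition qpath := {x : Q0 * seq darrow | valid x}.

Definition phead (p : qpath) : Q0 := (val p).1.
Definition ptail (p : qpath) : Q0 := last (val p).1 [seq dt a | a <- (val p).2].

Lemma epath_valid (i : Q0) : valid (i, [::]).
Proof. by []. Qed.
Lemma apath_valid (a : darrow) : valid (dh a, [:: a]).
Proof. by rewrite /valid /= eqxx. Qed.

Definition epath (i : Q0) : qpath := exist _ (i, [::]) (epath_valid i).
Definition apath (a : darrow) : qpath := exist _ (dh a, [:: a]) (apath_valid a).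

(* product of paths in the qpath algebra: pq if tp = hq, 0 (None) otherwise *)
Definition pmul (p q : qpath) : option qpath :=
  if ptail p == phead q then insub (phead p, (val p).2 ++ (val q).2) else None.
Definition omul (o1 o2 : option qpath) : option qpath :=
  match o1, o2 with Some p, Some q => pmul p q | _, _ => None end.

Section Modules.
Variables (R : comPzRingType) (V : lmodType R).

(* R-linear extension of a function on paths, evaluated at a qpath or 0 *)
Definition evo (f : qpath -> V) (o : option qpath) : V :=
  match o with Some p => f p | None => 0 end.

(* A left A-module, A = R Qbar / (mu - lambda): an R-module V with an
   action of every qpath (i.e. of the R-basis of R Qbar) which is an
   R-algebra homomorphism R Qbar -> End_R(V) (R-linear, multiplicative on
   the basis, unital: sum_i e_i = 1) and kills the generator
   sum_{i in Q0'} (sum_{ha = i} (-1)^|a| a abar - lambda_i e_i). *)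
Definition is_Amodule (Q0' : {set Q0}) (lambda : Q0 -> R)
    (act : qpath -> V -> V) : Prop :=
  [/\ forall p (c : R) (u v : V), act p (c *: u + v) = c *: act p u + act p v,
      forall v, \sum_(i : Q0) act (epath i) v = v,
      forall p q v, act p (act q v) = evo (fun r => act r v) (pmul p q)
    & forall v,
      \sum_(i in Q0')
        (\sum_(a : darrow | dh a == i)
            (-1) ^+ dsgn a *: act (apath a) (act (apath (dbar a)) v)
         - lambda i *: act (epath i) v) = 0].

(* An element of Hom_R(e_i A, V_j), represented by its values on the paths
   p with h p = i (an R-basis of e_i R Qbar), extended by 0 to the other
   paths.  The values lie in V_j = e_j V and the induced R-linear map on
   e_i R Qbar kills every element x (mu - lambda) y (x, y paths), i.e. the
   ideal, so that it factors through e_i A. *)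
Definition is_Hom (Q0' : {set Q0}) (lambda : Q0 -> R)
    (act : qpath -> V -> V) (i j : Q0) (k : qpath -> V) : Prop :=
  [/\ forall p, phead p != i -> k p = 0,
      forall p, act (epath j) (k p) = k p
    & forall x y : qpath,
      \sum_(l in Q0')
        (\sum_(a : darrow | dh a == l)
            (-1) ^+ dsgn a *: evo k (omul (omul (Some x) (Some (apath a)))
                                       (omul (Some (apath (dbar a))) (Some y)))
         - lambda l *: evo k (omul (omul (Some x) (Some (epath l))) (Some y)))
      = 0].

(* left A-module structure on Hom_R(e_i A, W): (x . k)(p) = k(p x) *)
Definition homact (x : qpath) (k : qpath -> V) : qpath -> V :=
  fun p => evo k (pmul p x).

Variable act : qpath -> V -> V.
Variable Q0' : {set Q0}.

Definition epsmap (v : V) : Q0 -> qpath -> V :=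
  fun i p => if phead p == i then act p v else 0.

Definition gmap (kappa : Q0 -> qpath -> V) : darrow -> qpath -> V :=
  fun a p => if phead p == dt a then
    evo (kappa (dh a)) (pmul (apath a) p) - act (apath a) (kappa (dt a) p)
    else 0.

(* m(gamma)_i (p_i) = sum_{ta = i} (-1)^|a| (abar gamma_a(p_i) + gamma_abar(a p_i)),
   components indexed by i in Q0' (and set to 0 outside Q0') *)
Definition mmap (gamma : darrow -> qpath -> V) : Q0 -> qpath -> V :=
  fun i p => if (i \in Q0') && (phead p == i) then
    \sum_(a : darrow | dt a == i)
      (-1) ^+ dsgn a *: (act (apath (dbar a)) (gamma a p)
                         + evo (gamma (dbar a)) (pmul (apath a) p))
    else 0.

End Modules.
End DoubleQuiver.

(* A nontrivial path p factors uniquely as p = a p' with a its first arrow, so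
   functions on paths can be analysed, and defined, by induction on the word.

   Then: eps, g and m are well defined and A-linear by direct computation; eps
   is injective because v = sum_i e_i v; ker g = im eps by induction on paths,
   with kappa(p) = p v for v = sum_i kappa_i(e_i); m o g = 0 follows from the
   relation in V and in e_i A; finally ker m is contained in im g via the
   explicit preimage kappa(a p') = a kappa(p') + gamma_a(p'), kappa(e_i) = 0,
   whose compatibility with the relation is proved by induction on paths. *)
From Pilot Require Import Defs.
From HB Require Import structures.
From mathcomp Require Import all_boot all_order all_algebra.
Import GRing.Theory.
Local Open Scope ring_scope.
Set Implicit Arguments. Unset Strict Implicit. Unset Printing Implicit Defensive.

Section Paths.
Variables (Q0 Q1 : finType) (t h : Q1 -> Q0).
Local Notation qp := (qpath t h).
Local Notation dt := (dt t h).
Local Notation dh := (dh t h).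
Local Notation valid := (valid t h).
Local Notation ap := (apath t h).
Local Notation ep := (epath t h).

Lemma valid_cons i a s : valid (i, a :: s) = (i == dh a) && valid (dt a, s).
Proof.
rewrite /Defs.valid /=; case: s => [|b s] /=; first by rewrite andbT.
by case: (i == _); case: (dt a == _); rewrite /= ?andbT ?andbF.
Qed.

Lemma valid_cat i s1 s2 :
  valid (i, s1) -> valid (last i [seq dt a | a <- s1], s2) -> valid (i, s1 ++ s2).
Proof.
elim: s1 i => [|a s1 IH] i //=.
by rewrite !valid_cons => /andP[-> ?] ?; apply: IH.
Qed.

Lemma dt_dbar a : dt (dbar a) = dh a. Proof. by case: a. Qed.
Lemma dh_dbar a : dh (dbar a) = dt a. Proof. by case: a. Qed.
Lemma dbarK : involutive (@dbar Q1). Proof. by case. Qed.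

Lemma phead_apath a : phead (ap a) = dh a. Proof. by []. Qed.
Lemma ptail_apath a : ptail (ap a) = dt a. Proof. by []. Qed.
Lemma phead_epath i : phead (ep i) = i. Proof. by []. Qed.
Lemma ptail_epath i : ptail (ep i) = i. Proof. by []. Qed.

Lemma pmul_none (p q : qp) : ptail p != phead q -> pmul p q = None.
Proof. by rewrite /pmul => /negbTE ->. Qed.

Lemma pmul_some (p q : qp) : ptail p = phead q ->
  {r | pmul p q = Some r & val r = (phead p, (val p).2 ++ (val q).2)}.
Proof.
move=> E; have Vpq : valid (phead p, (val p).2 ++ (val q).2).
  apply: valid_cat; first by case: (p) => [[j s]].
  by rewrite -/(ptail p) E /phead; case: (q) => [[j s]].
by exists (Sub _ Vpq : qp) => //; rewrite /pmul E eqxx insubT.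
Qed.

Lemma pmul_inv (p q r : qp) : pmul p q = Some r ->
  ptail p = phead q /\ val r = (phead p, (val p).2 ++ (val q).2).
Proof. by rewrite /pmul; case: eqP => // E; case: insubP => //= u _ Hu [<-]. Qed.

Lemma pmul_phead (p q r : qp) : pmul p q = Some r -> phead r = phead p.
Proof. by case/pmul_inv=> _ E; rewrite /phead E. Qed.

Lemma pmul_ptail (p q r : qp) : pmul p q = Some r -> ptail r = ptail q.
Proof.
case/pmul_inv=> E1 E2; rewrite /ptail E2 /= map_cat last_cat.
by rewrite -/(ptail p) E1.
Qed.

Lemma omul_phead (x : qp) o r : omul (Some x) o = Some r -> phead r = phead x.
Proof. by case: o => //= q /pmul_phead. Qed.

Lemma omul_assoc (x y z : option qp) : omul (omul x y) z = omul x (omul y z).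
Proof.
case: x => [x|]; last by case: y => [y|] //; case: z.
case: y => [y|]; last by case: z.
case: z => [z|] /=; last by case: (pmul x y).
have [Exy|Nxy] := eqVneq (ptail x) (phead y); last first.
  rewrite (pmul_none Nxy); case Hyz: (pmul y z) => [yz|] //=.
  by rewrite pmul_none // (pmul_phead Hyz).
have [xy Hxy Vxy] := pmul_some Exy; rewrite Hxy /=.
have [Eyz|Nyz] := eqVneq (ptail y) (phead z); last first.
  by rewrite !pmul_none // (pmul_ptail Hxy).
have [yz Hyz Vyz] := pmul_some Eyz; rewrite Hyz /=.
have [r1 -> V1] := pmul_some (etrans (pmul_ptail Hxy) Eyz : ptail xy = phead z).
have [r2 -> V2] := pmul_some (etrans Exy (esym (pmul_phead Hyz)) : ptail x = phead yz).
by congr Some; apply: val_inj; rewrite V1 V2 Vxy Vyz /= catA /phead Vxy.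
Qed.

Lemma pmul_epath_l i (p : qp) : phead p = i -> pmul (ep i) p = Some p.
Proof.
move=> E; have [r -> Vr] := @pmul_some (ep i) p (esym E); congr Some.
by apply: val_inj; rewrite Vr /= -E /phead /=; case: (sval p).
Qed.

Lemma pmul_epath_r i (p : qp) : ptail p = i -> pmul p (ep i) = Some p.
Proof.
move=> E; have [r -> Vr] := @pmul_some p (ep i) E; congr Some.
by apply: val_inj; rewrite Vr /= cats0 /phead; case: p {E Vr} => [[]].
Qed.

Lemma pmul_apath a (p : qp) : phead p = dt a ->
  {r | pmul (ap a) p = Some r & val r = (dh a, a :: (val p).2)}.
Proof. by move=> E; have [r H Vr] := @pmul_some (ap a) p (esym E); exists r. Qed.

Lemma path_decomp (p : qp) a s : (val p).2 = a :: s ->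
  {p' : qp | val p' = (dt a, s) & pmul (ap a) p' = Some p}.
Proof.
case: p => [[i s0]] /= Vp E; subst s0.
have := Vp; rewrite valid_cons => /andP[/eqP Ei Vs'].
exists (Sub _ Vs' : qp) => //.
have [r -> Vr] := pmul_apath (p := Sub _ Vs' : qp) (erefl _); congr Some.
by apply: val_inj; rewrite Vr /= -Ei.
Qed.

Lemma path_nil (p : qp) : (val p).2 = [::] -> p = ep (phead p).
Proof. by case: p => [[i s]] /= ? E; apply: val_inj => /=; rewrite /phead /= E. Qed.

End Paths.

(* Elementary consequences of R-linearity, for maps given with the single
   hypothesis f (c u + v) = c f(u) + f(v) used in the definitions. *)
Section LinearMaps.
Variables (R : comPzRingType) (V : lmodType R) (f : V -> V).
Hypothesis f_lin : forall (c : R) u v, f (c *: u + v) = c *: f u + f v.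

Lemma linf0 : f 0 = 0.
Proof. by have := f_lin (-1) 0 0; rewrite scaler0 add0r scaleN1r addNr. Qed.
Lemma linfD u v : f (u + v) = f u + f v.
Proof. by have := f_lin 1 u v; rewrite !scale1r. Qed.
Lemma linfZ c u : f (c *: u) = c *: f u.
Proof. by rewrite -[c *: u]addr0 f_lin linf0 addr0. Qed.
Lemma linfB u v : f (u - v) = f u - f v.
Proof. by rewrite linfD -scaleN1r linfZ scaleN1r. Qed.
Lemma linf_sum (I : Type) (r : seq I) (P : pred I) (F : I -> V) :
  f (\sum_(i <- r | P i) F i) = \sum_(i <- r | P i) f (F i).
Proof. exact: (big_morph f linfD linf0). Qed.
End LinearMaps.

Section Complex.
Variables (Q0 Q1 : finType) (t h : Q1 -> Q0).
Variables (R : comPzRingType) (V : lmodType R) (act : qpath t h -> V -> V).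
Variables (Q0' : {set Q0}) (lambda : Q0 -> R).
Hypothesis HA : is_Amodule Q0' lambda act.
Local Notation qp := (qpath t h).
Local Notation dt := (dt t h).
Local Notation dh := (dh t h).
Local Notation ap := (apath t h).
Local Notation ep := (epath t h).
Local Notation Hom := (is_Hom Q0' lambda act).

Lemma actL p (c : R) u v : act p (c *: u + v) = c *: act p u + act p v.
Proof. by case: HA => + _ _ _; apply. Qed.
Lemma act0 p : act p 0 = 0. Proof. exact/linf0/actL. Qed.
Lemma actD p u v : act p (u + v) = act p u + act p v. Proof. exact/linfD/actL. Qed.
Lemma actZ p c u : act p (c *: u) = c *: act p u. Proof. exact/linfZ/actL. Qed.
Lemma actB p u v : act p (u - v) = act p u - act p v. Proof. exact/linfB/actL. Qed.
Lemma act_sum p (I : Type) (r : seq I) (P : pred I) (F : I -> V) :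
  act p (\sum_(i <- r | P i) F i) = \sum_(i <- r | P i) act p (F i).
Proof. exact/linf_sum/actL. Qed.

Definition actO (o : option qp) v := evo (fun r => act r v) o.

Lemma act_mul p q v : act p (act q v) = actO (pmul p q) v.
Proof. by case: HA. Qed.

Lemma actO_mul o1 o2 v : actO (omul o1 o2) v = actO o1 (actO o2 v).
Proof. by case: o1 => [p|] //; case: o2 => [q|] /=; rewrite ?act_mul ?act0. Qed.

Lemma act_sum_epath v : \sum_(i : Q0) act (ep i) v = v.
Proof. by case: HA. Qed.

Lemma act_epath_l i p v : act (ep i) (act p v) = if phead p == i then act p v else 0.
Proof.
rewrite act_mul; case: eqP => E; first by rewrite pmul_epath_l.
by rewrite pmul_none //= ptail_epath eq_sym; apply/eqP.
Qed.

Lemma act_epath_r p j v : act p (act (ep j) v) = if ptail p == j then act p v else 0.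
Proof.
rewrite act_mul; case: eqP => E; first by rewrite pmul_epath_r.
by rewrite pmul_none //= phead_epath; apply/eqP.
Qed.

Lemma act_off p j w : act (ep j) w = w -> ptail p != j -> act p w = 0.
Proof. by move=> Hw /negbTE N; rewrite -Hw act_epath_r N. Qed.

Lemma act_apath_in a w : act (ep (dh a)) (act (ap a) w) = act (ap a) w.
Proof. by rewrite act_epath_l phead_apath eqxx. Qed.

(* The l-component of mu - lambda, acting on w. *)
Definition rel_act l w := \sum_(a : darrow Q1 | dh a == l)
    (-1) ^+ dsgn a *: act (ap a) (act (ap (dbar a)) w) - lambda l *: act (ep l) w.

Lemma rel_act_other l j w : l != j -> act (ep j) w = w -> rel_act l w = 0.
Proof.
move=> N Hw; rewrite /rel_act big1 ?sub0r.
  by rewrite (act_off Hw) ?scaler0 ?oppr0 // ptail_epath.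
move=> a /eqP E; rewrite (act_off Hw) ?act0 ?scaler0 //.
by rewrite ptail_apath dt_dbar E.
Qed.

Lemma act_relation l w : l \in Q0' -> act (ep l) w = w ->
  \sum_(a : darrow Q1 | dh a == l) (-1) ^+ dsgn a *: act (ap a) (act (ap (dbar a)) w)
  = lambda l *: w.
Proof.
move=> Hl Hw; have [_ _ _ /(_ w)] := HA.
rewrite (bigD1 l Hl) /= [X in _ + X]big1 ?addr0 => [|j /andP[_ N]].
  by rewrite Hw => /eqP; rewrite subr_eq0 => /eqP.
exact: rel_act_other Hw.
Qed.

Lemma sign_dbar (a : darrow Q1) : (-1) ^+ dsgn (dbar a) = - (-1) ^+ dsgn a :> R.
Proof. by case: a => a /=; rewrite ?expr0 ?expr1 ?opprK. Qed.

Lemma reindex_dbar (P : pred (darrow Q1)) (F : darrow Q1 -> V) :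
  \sum_(a | P a) F a = \sum_(b | P (dbar b)) F (dbar b).
Proof. exact: (reindex_inj (inv_inj (@dbarK Q1))). Qed.

(* A function F on monomials with F None = 0 stands
   for the R-linear map on R Qbar with these values on paths; rel_at l F y is
   its value on (sum_(ha = l) (-1)^|a| a abar - lambda_l e_l) y, and
   rel_eval F y its value on (mu - lambda) y. *)
Definition rel_at l (F : option qp -> V) (y : qp) :=
  \sum_(a : darrow Q1 | dh a == l)
     (-1) ^+ dsgn a *: F (omul (Some (ap a)) (omul (Some (ap (dbar a))) (Some y)))
  - lambda l *: F (omul (Some (ep l)) (Some y)).
Definition rel_eval F y := \sum_(l in Q0') rel_at l F y.

(* The third condition of is_Hom says that rel_eval kills every left
   translate o |-> k(x o) of k. *)
Lemma rel_eval_translate (k : qp -> V) x y :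
  \sum_(l in Q0')
     (\sum_(a : darrow Q1 | dh a == l)
         (-1) ^+ dsgn a *: evo k (omul (omul (Some x) (Some (ap a)))
                                    (omul (Some (ap (dbar a))) (Some y)))
      - lambda l *: evo k (omul (omul (Some x) (Some (ep l))) (Some y)))
  = rel_eval (fun o => evo k (omul (Some x) o)) y.
Proof.
apply: eq_bigr => l _; rewrite /rel_at omul_assoc; congr (_ - _).
by apply: eq_bigr => a _; rewrite omul_assoc.
Qed.

Lemma rel_eval_ext (F G : option qp -> V) y :
  (forall o, F o = G o) -> rel_eval F y = rel_eval G y.
Proof.
move=> E; apply: eq_bigr => l _; rewrite /rel_at !E.
by congr (_ - _); apply: eq_bigr => a _; rewrite E.
Qed.

Lemma rel_eval_lin (f : V -> V) :
  (forall (c : R) u v, f (c *: u + v) = c *: f u + f v) ->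
  forall F y, rel_eval (fun o => f (F o)) y = f (rel_eval F y).
Proof.
move=> f_lin F y; rewrite /rel_eval (linf_sum f_lin); apply: eq_bigr => l _.
rewrite /rel_at (linfB f_lin) (linfZ f_lin) (linf_sum f_lin); congr (_ - _).
by apply: eq_bigr => a _; rewrite (linfZ f_lin).
Qed.

Lemma rel_eval0 y : rel_eval (fun _ => 0) y = 0.
Proof.
by rewrite (@rel_eval_lin (fun _ => 0) _ (fun _ => 0)) // => c u v; rewrite scaler0 addr0.
Qed.

Lemma rel_evalZ c F y : rel_eval (fun o => c *: F o) y = c *: rel_eval F y.
Proof.
by apply: (@rel_eval_lin (fun u => c *: u)) => d u v; rewrite scalerDr !scalerA mulrC.
Qed.

Lemma rel_evalD F G y : rel_eval (fun o => F o + G o) y = rel_eval F y + rel_eval G y.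
Proof.
rewrite /rel_eval -big_split; apply: eq_bigr => l _; rewrite /rel_at /= scalerDr.
under eq_bigr do rewrite scalerDr.
by rewrite big_split /= opprD addrACA.
Qed.

Lemma rel_evalB F G y : rel_eval (fun o => F o - G o) y = rel_eval F y - rel_eval G y.
Proof.
rewrite rel_evalD (@rel_eval_lin -%R) // => c u v.
by rewrite opprD scalerN.
Qed.

Lemma rel_eval_sum (I : Type) (r : seq I) (P : pred I) (G : I -> option qp -> V) y :
  rel_eval (fun o => \sum_(a <- r | P a) G a o) y = \sum_(a <- r | P a) rel_eval (G a) y.
Proof.
elim: r => [|a r IH].
  by rewrite big_nil -[RHS](rel_eval0 y); apply: rel_eval_ext => o; apply: big_nil.
have E o : \sum_(b <- a :: r | P b) G b o
             = (if P a then G a o else 0) + \sum_(b <- r | P b) G b o.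
  by rewrite big_cons; case: (P a); rewrite ?add0r.
rewrite (rel_eval_ext _ E) rel_evalD IH big_cons.
by case: (P a); rewrite ?rel_eval0 ?add0r.
Qed.

Lemma rel_at_other l F y : F None = 0 -> l != phead y -> rel_at l F y = 0.
Proof.
move=> F0 N; rewrite /rel_at big1 ?sub0r.
  by rewrite /= pmul_none ?F0 ?scaler0 ?oppr0 // ptail_epath.
move=> a /eqP E; rewrite /= pmul_none ?F0 ?scaler0 //.
by rewrite ptail_apath dt_dbar E.
Qed.

Lemma rel_eval_out F y : F None = 0 -> phead y \notin Q0' -> rel_eval F y = 0.
Proof.
move=> F0 N; rewrite /rel_eval big1 // => l Hl; apply: rel_at_other => //.
by apply: contraNneq N => <-.
Qed.

Lemma rel_eval_in F y : F None = 0 -> phead y \in Q0' -> rel_eval F y = rel_at (phead y) F y.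
Proof.
move=> F0 Hy; rewrite /rel_eval (bigD1 (phead y)) //= big1 ?addr0 //.
by move=> l /andP[_ N]; apply: rel_at_other.
Qed.

Lemma rel_eval_actO v y : rel_eval (fun o => actO o v) y = 0.
Proof.
case: (boolP (phead y \in Q0')) => Hy; last by rewrite rel_eval_out.
rewrite rel_eval_in // /rel_at -act_mul act_epath_l eqxx.
rewrite -[RHS](subrr (lambda (phead y) *: act y v)); congr (_ - _).
rewrite -act_relation ?act_epath_l ?eqxx //.
by apply: eq_bigr => a _; rewrite !actO_mul.
Qed.

Lemma evo_ext (f g : qp -> V) o : (forall q, f q = g q) -> evo f o = evo g o.
Proof. by case: o => //= q ->. Qed.

Lemma evo_lin (c : R) (f g : qp -> V) o :
  evo (fun q => c *: f q + g q) o = c *: evo f o + evo g o.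
Proof. by case: o => //=; rewrite scaler0 addr0. Qed.

Lemma evo_homact (k : qp -> V) x o : evo (homact x k) o = evo k (omul o (Some x)).
Proof. by case: o. Qed.

Lemma evo_guarded i (k : qp -> V) (Phi : option qp -> V) x o :
  Phi None = 0 -> (forall r, k r = if phead r == i then Phi (Some r) else 0) ->
  evo k (omul (Some x) o) = if phead x == i then Phi (omul (Some x) o) else 0.
Proof.
move=> P0 E; case H: (omul (Some x) o) => [r|] /=; last by rewrite P0; case: ifP.
by rewrite E (omul_phead H).
Qed.

Lemma rel_eval_guarded i (k : qp -> V) (Phi : option qp -> V) x y :
  Phi None = 0 -> (forall r, k r = if phead r == i then Phi (Some r) else 0) ->
  (phead x = i -> rel_eval (fun o => Phi (omul (Some x) o)) y = 0) ->
  rel_eval (fun o => evo k (omul (Some x) o)) y = 0.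
Proof.
move=> P0 E Hx; have [Ex|Nx] := eqVneq (phead x) i.
  rewrite -[RHS](Hx Ex); apply: rel_eval_ext => o.
  by rewrite (evo_guarded _ _ P0 E) Ex eqxx.
rewrite -[RHS](rel_eval0 y); apply: rel_eval_ext => o.
by rewrite (evo_guarded _ _ P0 E) (negbTE Nx).
Qed.

Lemma evo_epath i (k : qp -> V) o : (forall p, phead p != i -> k p = 0) ->
  evo k (omul (Some (ep i)) o) = evo k o.
Proof.
move=> H; case: o => [q|] //=; have [E|N] := eqVneq (phead q) i.
  by rewrite pmul_epath_l.
by rewrite pmul_none ?H // ptail_epath eq_sym.
Qed.

Lemma evo_in j (k : qp -> V) o : (forall q, act (ep j) (k q) = k q) ->
  act (ep j) (evo k o) = evo k o.
Proof. by move=> H; case: o => [q|] /=; rewrite ?H ?act0. Qed.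

Lemma Hom_off i j k : Hom i j k -> forall p, phead p != i -> k p = 0.
Proof. by case. Qed.

Lemma Hom_in i j k : Hom i j k -> forall p, act (ep j) (k p) = k p.
Proof. by case. Qed.

Lemma Hom_kill i j k : Hom i j k ->
  forall ox y, rel_eval (fun o => evo k (omul ox o)) y = 0.
Proof.
case=> _ _ H [x|] y; first by rewrite -rel_eval_translate; apply: H.
by rewrite -[RHS](rel_eval0 y); apply: rel_eval_ext.
Qed.

Lemma Hom_kill_mul i j k : Hom i j k ->
  forall x1 x2 y, rel_eval (fun o => evo k (omul (Some x1) (omul (Some x2) o))) y = 0.
Proof.
move=> Hk x1 x2 y; rewrite -[RHS](Hom_kill Hk (omul (Some x1) (Some x2)) y).
by apply: rel_eval_ext => o; rewrite omul_assoc.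
Qed.

Lemma mk_Hom i j k : (forall p, phead p != i -> k p = 0) ->
  (forall p, act (ep j) (k p) = k p) ->
  (forall x y, rel_eval (fun o => evo k (omul (Some x) o)) y = 0) -> Hom i j k.
Proof. by move=> H1 H2 H3; split=> // x y; rewrite rel_eval_translate. Qed.

(* The values of g(kappa)_a and m(gamma)_i on monomials, before restriction
   to paths with the right head. *)
Definition gext kappa a (o : option qp) :=
  evo (kappa (dh a)) (omul (Some (ap a)) o) - act (ap a) (evo (kappa (dt a)) o).

Definition mext gamma i (o : option qp) :=
  \sum_(a : darrow Q1 | dt a == i) (-1) ^+ dsgn a *:
     (act (ap (dbar a)) (evo (gamma a) o) + evo (gamma (dbar a)) (omul (Some (ap a)) o)).

Lemma gext_None kappa a : gext kappa a None = 0.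
Proof. by rewrite /gext /= act0 subr0. Qed.

Lemma mext_None gamma i : mext gamma i None = 0.
Proof. by rewrite /mext big1 // => a _; rewrite /= act0 addr0 scaler0. Qed.

Lemma gmapE kappa a r :
  gmap act kappa a r = if phead r == dt a then gext kappa a (Some r) else 0.
Proof. by []. Qed.

Lemma mmapE gamma i r : i \in Q0' ->
  mmap act Q0' gamma i r = if phead r == i then mext gamma i (Some r) else 0.
Proof. by rewrite /mmap => ->. Qed.

Lemma eps_hom v i : Hom i i (epsmap act v i).
Proof.
apply: mk_Hom => [p N|p|x y]; first by rewrite /epsmap (negbTE N).
  rewrite /epsmap; case: eqP => [<-|_]; last by rewrite act0.
  by rewrite act_epath_l eqxx.
apply: (@rel_eval_guarded i _ (fun o => actO o v)) => // _.
under rel_eval_ext do rewrite actO_mul.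
by rewrite (rel_eval_lin (actL x)) rel_eval_actO act0.
Qed.

Lemma g_hom kappa : (forall i, Hom i i (kappa i)) ->
  forall a, Hom (dt a) (dh a) (gmap act kappa a).
Proof.
move=> Hk a; apply: mk_Hom => [p N|p|x y]; first by rewrite /gmap (negbTE N).
  rewrite gmapE; case: ifP => _; last by rewrite act0.
  by rewrite actB act_apath_in evo_in //; apply: Hom_in (Hk (dh a)).
apply: (rel_eval_guarded (gext_None kappa a) (gmapE kappa a)) => _.
rewrite rel_evalB (rel_eval_lin (actL (ap a))).
by rewrite (Hom_kill_mul (Hk (dh a))) (Hom_kill (Hk (dt a))) act0 subr0.
Qed.

Lemma m_hom gamma : (forall a, Hom (dt a) (dh a) (gamma a)) ->
  forall i, i \in Q0' -> Hom i i (mmap act Q0' gamma i).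
Proof.
move=> Hg i Hi; apply: mk_Hom => [p N|p|x y]; first by rewrite /mmap (negbTE N) andbF.
  rewrite mmapE //; case: ifP => _; last by rewrite act0.
  rewrite act_sum; apply: eq_bigr => a /eqP E.
  have := Hom_in (Hg (dbar a)); rewrite dh_dbar E => Hin.
  by rewrite actZ actD act_epath_l phead_apath dh_dbar E eqxx evo_in.
apply: (rel_eval_guarded (mext_None gamma i) (fun r => mmapE gamma r Hi)) => _.
rewrite rel_eval_sum big1 // => a _.
rewrite rel_evalZ rel_evalD (rel_eval_lin (actL (ap (dbar a)))).
by rewrite (Hom_kill (Hg a)) (Hom_kill_mul (Hg (dbar a))) act0 addr0 scaler0.
Qed.

Lemma eps_lin (c : R) v w i p :
  epsmap act (c *: v + w) i p = c *: epsmap act v i p + epsmap act w i p.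
Proof. by rewrite /epsmap; case: ifP => _; [apply: actL | rewrite scaler0 addr0]. Qed.

Lemma eps_homact x v i p : epsmap act (act x v) i p = homact x (epsmap act v i) p.
Proof.
rewrite /homact /epsmap act_mul.
by case: (boolP (phead p == i)) => Hp; case E: (pmul p x) => [r|] //=;
  rewrite (pmul_phead E) ?Hp ?(negbTE Hp).
Qed.

Lemma g_lin (c : R) kappa kappa' a p :
  gmap act (fun i q => c *: kappa i q + kappa' i q) a p
  = c *: gmap act kappa a p + gmap act kappa' a p.
Proof.
rewrite !gmapE; case: ifP => _; last by rewrite scaler0 addr0.
by rewrite /gext evo_lin actL scalerBr opprD addrACA.
Qed.

Lemma g_homact x kappa a p :
  gmap act (fun i => homact x (kappa i)) a p = homact x (gmap act kappa a) p.
Proof.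
rewrite gmapE [RHS](evo_guarded _ (Some x) (gext_None kappa a) (gmapE kappa a)).
case: ifP => // _; rewrite /gext !evo_homact -omul_assoc.
by rewrite (omul_assoc (Some (ap a))).
Qed.

Lemma m_lin (c : R) gamma gamma' i p :
  mmap act Q0' (fun a q => c *: gamma a q + gamma' a q) i p
  = c *: mmap act Q0' gamma i p + mmap act Q0' gamma' i p.
Proof.
rewrite /mmap; case: ifP => _; last by rewrite scaler0 addr0.
rewrite scaler_sumr -big_split; apply: eq_bigr => a _.
rewrite /= evo_lin actL scalerA mulrC -scalerA -scalerDr; congr (_ *: _).
by rewrite scalerDr addrACA.
Qed.

Lemma m_homact x gamma i p :
  mmap act Q0' (fun a => homact x (gamma a)) i p = homact x (mmap act Q0' gamma i) p.
Proof.
case: (boolP (i \in Q0')) => Hi; last by rewrite /homact /mmap (negbTE Hi); case: (pmul p x).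
rewrite mmapE // [RHS](evo_guarded _ (Some x) (mext_None gamma i) (fun r => mmapE gamma r Hi)).
case: ifP => // _; apply: eq_bigr => a _; rewrite !evo_homact.
by rewrite (omul_assoc (Some (ap a)) (Some p) (Some x)).
Qed.

(* Exactness at V: v = sum_i e_i v. *)
Lemma eps_inj v : (forall i p, epsmap act v i p = 0) -> v = 0.
Proof.
move=> H; rewrite -(act_sum_epath v) big1 // => i _.
by have := H i (ep i); rewrite /epsmap phead_epath eqxx.
Qed.

Lemma eps_ker kappa v : (forall i p, kappa i p = epsmap act v i p) ->
  forall a p, gmap act kappa a p = 0.
Proof.
move=> H a p; rewrite gmapE; case: eqP => // E.
rewrite /gext /= H (evo_ext _ (H (dh a))).
have [r Hr _] := pmul_apath E; rewrite Hr /= /epsmap (pmul_phead Hr) E !eqxx.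
by rewrite act_mul Hr subrr.
Qed.

(* A cycle kappa of g is determined by v = sum_i kappa_i(e_i):
   kappa(a p') = a kappa(p') by induction on the path. *)
Lemma ker_g_orbit kappa : (forall i, Hom i i (kappa i)) ->
  (forall a p, gmap act kappa a p = 0) ->
  forall p, kappa (phead p) p = act p (\sum_j kappa j (ep j)).
Proof.
move=> Hk Hg p; move Es: (val p).2 => s; elim: s p Es => [|a s IH] p Es.
  move: (phead p) (path_nil Es) => i ->; rewrite act_sum (bigD1 i) //= big1 ?addr0.
    by rewrite (Hom_in (Hk i)).
  move=> j /negbTE N; apply: (act_off (Hom_in (Hk j) (ep j))).
  by rewrite ptail_epath eq_sym N.
have [p' Vp' Hp'] := path_decomp Es.
have Ep' : phead p' = dt a by rewrite /phead Vp'.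
have := Hg a p'; rewrite gmapE Ep' eqxx /gext /= Hp' /= => /eqP; rewrite subr_eq0.
by rewrite (pmul_phead Hp') => /eqP ->; rewrite -Ep' IH ?Vp' // act_mul Hp'.
Qed.

Lemma ker_eps kappa : (forall i, Hom i i (kappa i)) ->
  (forall a p, gmap act kappa a p = 0) ->
  forall i p, kappa i p = epsmap act (\sum_j kappa j (ep j)) i p.
Proof.
move=> Hk Hg i p; rewrite /epsmap; case: eqP => [<-|/eqP N].
  exact: ker_g_orbit.
exact: (Hom_off (Hk i)).
Qed.

Lemma Hom_relation i k p : i \in Q0' -> Hom i i k -> phead p = i ->
  \sum_(b : darrow Q1 | dh b == i) (-1) ^+ dsgn b *:
     evo k (omul (Some (ap b)) (omul (Some (ap (dbar b))) (Some p)))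
  = lambda i *: k p.
Proof.
move=> Hi Hk Ep; have := Hom_kill Hk (Some (ep i)) p.
rewrite (rel_eval_ext (G := evo k)) => [|o]; last exact: (evo_epath _ (Hom_off Hk)).
rewrite rel_eval_in ?Ep // /rel_at => /eqP; rewrite subr_eq0 => /eqP ->.
by rewrite /= pmul_epath_l.
Qed.

(* m o g = 0: both relations contribute lambda_i kappa_i(p). *)
Lemma im_g_ker_m (gamma : darrow Q1 -> qp -> V) kappa :
  (forall i, Hom i i (kappa i)) -> (forall a p, gamma a p = gmap act kappa a p) ->
  forall i p, i \in Q0' -> mmap act Q0' gamma i p = 0.
Proof.
move=> Hk Hg i p Hi; rewrite mmapE //; case: eqP => // Ep.
pose X b := evo (kappa i) (omul (Some (ap b)) (omul (Some (ap (dbar b))) (Some p))).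
pose Y b := act (ap b) (act (ap (dbar b)) (kappa i p)).
have term a : dt a == i ->
    act (ap (dbar a)) (evo (gamma a) (Some p))
    + evo (gamma (dbar a)) (omul (Some (ap a)) (Some p)) = X (dbar a) - Y (dbar a).
  move=> /eqP Ea; have [r Hr _] := @pmul_apath _ _ t h a p (etrans Ep (esym Ea)).
  rewrite /X /Y dbarK /= Hr /= !Hg !gmapE (pmul_phead Hr) dt_dbar Ep Ea !eqxx.
  rewrite /gext /= Hr dh_dbar Ea.
  by rewrite actB dt_dbar /= addrC addrA addrNK.
rewrite /mext (eq_bigr _ (fun a Ea => congr1 _ (term a Ea))) reindex_dbar.
under eq_bigl do rewrite dt_dbar.
under eq_bigr do rewrite dbarK sign_dbar scaleNr scalerBr opprB.
rewrite sumrB (Hom_relation Hi (Hk i) Ep) act_relation ?subrr //.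
exact: (Hom_in (Hk i) p).
Qed.

(* The preimage under g of a cycle gamma of m, computed on arrow words:
   kappa(e_i) = 0 and kappa(a p') = a kappa(p') + gamma_a(p'). *)
Fixpoint pre_word (gamma : darrow Q1 -> qp -> V) (s : seq (darrow Q1)) : V :=
  match s with
  | [::] => 0
  | a :: s' => act (ap a) (pre_word gamma s') + evo (gamma a) (insub (dt a, s'))
  end.

Section Preimage.
Variable gamma : darrow Q1 -> qp -> V.
Hypothesis Hg : forall a, Hom (dt a) (dh a) (gamma a).

Definition pre (p : qp) := pre_word gamma (val p).2.

Definition pre_kappa i (p : qp) := if phead p == i then pre p else 0.

Lemma pre_in (p : qp) : act (ep (phead p)) (pre p) = pre p.
Proof.
rewrite /pre; case Es: (val p).2 => [|a s] /=; first by rewrite act0.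
have [p' _ Hp'] := path_decomp Es.
by rewrite (pmul_phead Hp') phead_apath actD act_apath_in evo_in //; apply: Hom_in (Hg a).
Qed.

Lemma pre_cons a o :
  evo pre (omul (Some (ap a)) o) = act (ap a) (evo pre o) + evo (gamma a) o.
Proof.
case: o => [r|] /=; last by rewrite act0 addr0.
have [E|N] := eqVneq (phead r) (dt a).
  have [r' -> Vr'] := pmul_apath E; rewrite /pre /= Vr' /= -E.
  by rewrite /phead -surjective_pairing valK.
rewrite pmul_none ?ptail_apath 1?eq_sym //= (Hom_off (Hg a) N) addr0.
by rewrite (act_off (pre_in r)) // ptail_apath eq_sym.
Qed.

Lemma pre_epath j o : evo pre (omul (Some (ep j)) o) = act (ep j) (evo pre o).
Proof.
case: o => [r|] /=; last by rewrite act0.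
have [E|N] := eqVneq (phead r) j; first by rewrite pmul_epath_l // -E pre_in.
by rewrite pmul_none ?ptail_epath 1?eq_sym // (act_off (pre_in r)) // ptail_epath eq_sym.
Qed.

Lemma g_pre a p : gmap act pre_kappa a p = gamma a p.
Proof.
rewrite gmapE; case: eqP => [E|/eqP N]; last by rewrite (Hom_off (Hg a) N).
rewrite /gext (@evo_guarded (dh a) _ (evo pre)) // phead_apath eqxx pre_cons /=.
by rewrite /pre_kappa E eqxx addrC addKr.
Qed.

Hypothesis Hm : forall i p, i \in Q0' -> mmap act Q0' gamma i p = 0.

(* kappa kills (mu - lambda) y: the relation in V removes the terms
   a abar kappa(y), and the remaining terms form m(gamma)(y) = 0. *)
Lemma pre_rel y : rel_eval (evo pre) y = 0.
Proof.
case: (boolP (phead y \in Q0')) => Hy; last by rewrite rel_eval_out.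
rewrite rel_eval_in // /rel_at pre_epath [act _ _]pre_in.
under eq_bigr do rewrite !pre_cons actD -addrA scalerDr.
rewrite big_split /= addrAC act_relation ?pre_in // subrr add0r.
have := Hm y Hy; rewrite mmapE // eqxx /mext reindex_dbar => Hmy.
apply/eqP; rewrite -oppr_eq0 -sumrN; apply/eqP; rewrite -[RHS]Hmy.
apply: eq_big => [b|b _]; first by rewrite dt_dbar.
by rewrite dbarK sign_dbar scaleNr.
Qed.

Lemma pre_rel_translate x y : rel_eval (fun o => evo pre (omul (Some x) o)) y = 0.
Proof.
move Es: (val x).2 => s; elim: s x Es => [|a s IH] x Es.
  rewrite (path_nil Es); under rel_eval_ext do rewrite pre_epath.
  by rewrite (rel_eval_lin (actL _)) pre_rel act0.
have [x' Vx' Hx'] := path_decomp Es.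
have Ex o : omul (Some x) o = omul (Some (ap a)) (omul (Some x') o).
  by rewrite -omul_assoc /= Hx'.
under rel_eval_ext do rewrite Ex pre_cons.
rewrite rel_evalD (rel_eval_lin (actL _)) IH ?Vx' // act0 add0r.
exact: (Hom_kill (Hg a)).
Qed.

Lemma pre_kappa_hom i : Hom i i (pre_kappa i).
Proof.
apply: mk_Hom => [p N|p|x y]; first by rewrite /pre_kappa (negbTE N).
  by rewrite /pre_kappa; case: eqP => [<-|_]; rewrite ?pre_in ?act0.
exact: (rel_eval_guarded (Phi := evo pre)) (fun _ => pre_rel_translate x y).
Qed.

End Preimage.

End Complex.

Unset Implicit Arguments.
Theorem proposition2p1
  (R : comPzRingType) (Q0 Q1 : finType) (t h : Q1 -> Q0)
  (Q0' : {set Q0}) (lambda : Q0 -> R)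
  (V : lmodType R) (act : qpath t h -> V -> V) :
  Q0' != set0 ->
  is_Amodule Q0' lambda act ->
  let Hom i j k := is_Hom Q0' lambda act i j k in
  let eps := epsmap act in
  let g := gmap act in
  let m := mmap act Q0' in
  (* the three maps are well defined *)
  [/\ forall v, forall i, Hom i i (eps v i),
      forall kappa, (forall i, Hom i i (kappa i)) ->
        forall a, Hom (dt t h a) (dh t h a) (g kappa a)
    & forall gamma, (forall a, Hom (dt t h a) (dh t h a) (gamma a)) ->
        forall i, i \in Q0' -> Hom i i (m gamma i)] /\
  (* they are homomorphisms of left A-modules *)
  [/\ (forall (c : R) v w i p, eps (c *: v + w) i p = c *: eps v i p + eps w i p)
      /\ (forall x v i p, eps (act x v) i p = homact x (eps v i) p),
      (forall (c : R) kappa kappa' a p,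
          g (fun i q => c *: kappa i q + kappa' i q) a p
          = c *: g kappa a p + g kappa' a p)
      /\ (forall x kappa a p,
          g (fun i => homact x (kappa i)) a p = homact x (g kappa a) p)
    & (forall (c : R) gamma gamma' i p,
          m (fun a q => c *: gamma a q + gamma' a q) i p
          = c *: m gamma i p + m gamma' i p)
      /\ (forall x gamma i p,
          m (fun a => homact x (gamma a)) i p = homact x (m gamma i) p)] /\
  (* exactness *)
  [/\ forall v, (forall i p, eps v i p = 0) -> v = 0,
      forall kappa, (forall i, Hom i i (kappa i)) ->
        ((forall a p, g kappa a p = 0) <->
         exists v, forall i p, kappa i p = eps v i p)
    & forall gamma, (forall a, Hom (dt t h a) (dh t h a) (gamma a)) ->
        ((forall i p, i \in Q0' -> m gamma i p = 0) <->
         exists kappa, (forall i, Hom i i (kappa i)) /\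
                       forall a p, gamma a p = g kappa a p)].
Proof.
move=> _ HA /=; split; last split; split.
- exact: (eps_hom HA).
- exact: (g_hom HA).
- exact: (m_hom HA).
- by split; [exact: (eps_lin HA) | exact: (eps_homact HA)].
- by split; [exact: (g_lin HA) | exact: (g_homact HA)].
- by split; [exact: (m_lin HA) | exact: (m_homact HA)].
- exact: (eps_inj HA).
- move=> kappa Hk; split=> [Hg | [v Hv]]; last exact: (eps_ker HA Hv).
  by exists (\sum_j kappa j (epath t h j)); apply: (ker_eps HA).
- move=> gamma Hg; split=> [Hm | [kappa [Hk Hgk]]]; last exact: (im_g_ker_m HA Hk Hgk).
  exists (pre_kappa act gamma); split=> [i | a p]; first exact: (pre_kappa_hom HA Hg Hm).
  by rewrite (g_pre HA Hg).
Qed.
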